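(* Let $\mathcal H$ be a real Hilbert space and let $\Phi:\mathbb R\to\mathcal H$ be a differentiable map with Lipschitz-continuous differential (so the number of parameters is $W=1$). For a target $\mathbf f\in\mathcal H$ let $L_{\mathbf f}(w)=\frac12\|\mathbf f-\Phi(w)\|^2$ and let $w(t)$, $t\ge 0$, be the solution of the gradient flow $\frac{dw}{dt}=-\frac{d}{dw}L_{\mathbf f}(w(t))$ with $w(0)=0$. Let $F_\Phi=\{\mathbf f\in\mathcal H:\inf_{t\ge0}L_{\mathbf f}(w(t))=0\}$. If $\mathbf f\in F_\Phi$, then either $\mathbf f=\Phi(w)$ for some $w\in\mathbb R$, or $\mathbf f\in\{\mathbf f_-,\mathbf f_+\}$, where $\mathbf f_\pm=\lim_{w\to\pm\infty}\Phi(w)$ (whenever these limits exist). In particular, if $\mathcal H=\mathbb R^d$ with $2\le d<\infty$, then $F_\Phi$ has Lebesgue measure $0$ in $\mathcal H$.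
   Context: The gradient flow solution exists and is unique for all $t\ge0$ under the stated regularity of $\Phi$. Elements of $F_\Phi$ are called GF-learnable targets. *)

From HB Require Import structures.
From mathcomp Require Import all_boot all_order all_algebra.
From mathcomp Require Import all_classical all_reals all_analysis.
Set Implicit Arguments. Unset Strict Implicit. Unset Printing Implicit Defensive.
Import Order.TTheory GRing.Theory Num.Theory.
Import numFieldNormedType.Exports.
Local Open Scope classical_set_scope.
Local Open Scope ring_scope.

Section GF.
Variable R : realType.

Definition is_inner_product (H : normedModType R) (ip : H -> H -> R) : Prop :=
  [/\ (forall x y, ip x y = ip y x),
      (forall (a : R) x y z, ip (a *: x + y) z = a * ip x z + ip y z)
    & (forall x, x != 0 -> 0 < ip x x)].

Definition ipnorm (H : normedModType R) (ip : H -> H -> R) (x : H) : R :=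
  Num.sqrt (ip x x).

Definition C11 (H : normedModType R) (ip : H -> H -> R) (Phi : R -> H) : Prop :=
  (forall w : R, derivable Phi w 1) /\
  exists k : R, forall x y : R,
    ipnorm ip (derive1 Phi x - derive1 Phi y) <= k * `|x - y|.

Definition loss (H : normedModType R) (ip : H -> H -> R) (Phi : R -> H)
    (f : H) (w : R) : R :=
  2^-1 * ip (f - Phi w) (f - Phi w).

Definition is_GF_solution (H : normedModType R) (ip : H -> H -> R)
    (Phi : R -> H) (f : H) (w : R -> R) : Prop :=
  [/\ w 0 = 0,
      {within [set t : R | 0 <= t], continuous w}
    & forall t : R, 0 < t ->
        derivable w t 1 /\ derive1 w t = - derive1 (loss ip Phi f) (w t)].

Definition GF_learnable (H : normedModType R) (ip : H -> H -> R)
    (Phi : R -> H) : set H :=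
  [set f | exists w : R -> R, is_GF_solution ip Phi f w /\
     inf [set loss ip Phi f (w t) | t in [set t : R | 0 <= t]] = 0].

Definition dotrv (d : nat) (u v : 'rV[R]_d) : R := \sum_(i < d) u 0 i * v 0 i.

Definition lebesgue_null (d : nat) (A : set 'rV[R]_d) : Prop :=
  forall eps : R, 0 < eps ->
    exists a b : nat -> 'rV[R]_d,
      [/\ (forall n i, a n 0 i <= b n 0 i),
          A `<=` \bigcup_n [set x | forall i, a n 0 i <= x 0 i <= b n 0 i]
        & forall N : nat, \sum_(n < N) \prod_(i < d) (b n 0 i - a n 0 i) <= eps].

End GF.

(* Along the gradient flow the loss t |-> L (w t) is nonincreasing, its derivative
   being -(L' (w t))^2.  If w returns infinitely often to some [-B, B], the minimum
   of L on [-B, B] is at most inf_t L (w t) = 0, so f = Phi c.  Otherwise |w t| -> oo,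
   hence by continuity w t -> +oo or w t -> -oo; every point beyond w t0 is visited
   after time t0, so L -> 0 at that end of the line and Phi tends to f there.
   In R^d the learnable targets thus lie in two points and the images of the
   segments [-n, n] under Phi, which is Lipschitz on each of them; such an image is
   covered by m cubes of side O(1/m), of total volume O(m^(1-d)) -> 0 as d >= 2. *)

From HB Require Import structures.
From mathcomp Require Import all_boot all_order all_algebra.
From mathcomp Require Import all_classical all_reals all_analysis.
From mathcomp Require Import ring lra zify.
From Stdlib Require Cantor.
Import Order.TTheory GRing.Theory Num.Theory.
Import numFieldNormedType.Exports.
Local Open Scope classical_set_scope.
Local Open Scope ring_scope.

Lemma inf_image_eq0_lt {R : realType} {T : Type} (A : set T) (g : T -> R) :
  A !=set0 -> (forall t, A t -> 0 <= g t) -> inf (g @` A) = 0 ->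
  forall e, 0 < e -> exists2 t, A t & g t < e.
Proof.
move=> [t0 At0] g0 infg e e0.
have hinf : has_inf (g @` A).
  by split; [exists (g t0), t0 | exists 0 => _ [t At <-]; exact: g0].
by have [_ [t At <-]] := inf_adherent e0 hinf; rewrite infg add0r; exists t.
Qed.

Lemma continuous_pos_on_ray {R : realType} (v : R -> R) (a : R) :
  {within [set t | a <= t], continuous v} -> (forall t, a <= t -> v t != 0) ->
  0 < v a -> forall t, a <= t -> 0 < v t.
Proof.
move=> vc v_neq0 va t at_; rewrite ltNge; apply/negP => vt.
have vc' : {within `[a, t], continuous v}.
  by apply: continuous_subspaceW vc => s /=; rewrite in_itv /= => /andP[].
have [|c /[!in_itv] /andP[ac _] vc0] := IVT at_ vc' (v := 0).
  by rewrite ge_min le_max vt (ltW va) orbT.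
by have := v_neq0 c ac; rewrite vc0 eqxx.
Qed.

Section flow_tail.
Context {R : realType} (L w : R -> R).
Hypothesis w_cont : {within [set t | 0 <= t], continuous w}.
Hypothesis L_ge0 : forall x, 0 <= L x.
Hypothesis Lw_nonincreasing : forall s t, 0 <= s -> s <= t -> L (w t) <= L (w s).
Hypothesis Lw_small : forall e, 0 < e -> exists2 t, 0 <= t & L (w t) < e.

(* Every x beyond w t0 is reached by the flow after time t0, so L x <= L (w t0). *)
Lemma flow_tail : w t @[t --> +oo] --> +oo -> L x @[x --> +oo] --> 0.
Proof.
move=> /cvgryPgt wy; apply/cvgrPdist_lt => e e0.
have [t0 t00 Lt0] := Lw_small e e0.
exists (w t0); split; first exact: num_real.
move=> x xt0; rewrite sub0r normrN ger0_norm //.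
have [T [_ hT]] := wy x.
set t1 := Num.max (T + 1) t0.
have t0t1 : t0 <= t1 by rewrite le_max lexx orbT.
have xt1 : x < w t1 by apply: hT; rewrite lt_max ltrDl ltr01.
have wc : {within `[t0, t1], continuous w}.
  apply: continuous_subspaceW w_cont => s /=; rewrite in_itv /= => /andP[+ _].
  exact: le_trans.
have [|c /[!in_itv] /andP[t0c _] <-] := IVT t0t1 wc (v := x).
  by rewrite ge_min le_max (ltW xt0) (ltW xt1) orbT.
exact: le_lt_trans (Lw_nonincreasing _ _ t00 t0c) Lt0.
Qed.

End flow_tail.

Section flow_on_the_line.
Context {R : realType} (L w : R -> R).
Hypothesis w_cont : {within [set t | 0 <= t], continuous w}.
Hypothesis L_cont : continuous L.
Hypothesis L_ge0 : forall x, 0 <= L x.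
Hypothesis Lw_nonincreasing : forall s t, 0 <= s -> s <= t -> L (w t) <= L (w s).
Hypothesis Lw_small : forall e, 0 < e -> exists2 t, 0 <= t & L (w t) < e.

Lemma flow_recurrent_zero :
  (exists B, forall T, exists2 t, T <= t & `|w t| <= B) -> exists c, L c = 0.
Proof.
move=> [B hB]; have [t _ tB] := hB 0.
have BB : - B <= B by have := normr_ge0 (w t); lra.
have [c _ cmin] := EVT_min BB (continuous_subspaceT L_cont).
exists c; apply/eqP; rewrite eq_le L_ge0 andbT; apply/ler_addgt0Pr => e e0.
have [t0 t00 Lt0] := Lw_small e e0; have [t1 t01 t1B] := hB t0.
rewrite add0r; apply/ltW/(le_lt_trans _ Lt0)/(le_trans _ (Lw_nonincreasing _ _ t00 t01)).
by apply: cmin; rewrite in_itv /= -ler_norml.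
Qed.

Lemma flow_escape : `|w t| @[t --> +oo] --> +oo ->
  (w t @[t --> +oo] --> +oo) \/ (- w t @[t --> +oo] --> +oo).
Proof.
move=> /cvgryPgt wy; have [T [_ hT]] := wy 0.
set T1 := Num.max (T + 1) 0.
have T1_ge t : T1 <= t -> T < t by apply: lt_le_trans; rewrite lt_max ltrDl ltr01.
have wc : {within [set t | T1 <= t], continuous w}.
  apply: continuous_subspaceW w_cont => s /=; apply: le_trans.
  by rewrite le_max lexx orbT.
have w_neq0 t : T1 <= t -> w t != 0 by move/T1_ge/hT; rewrite normr_gt0.
have [wT1|wT1] := ltP 0 (w T1).
  left; have wpos := @continuous_pos_on_ray _ _ _ wc w_neq0 wT1.
  apply/cvgryPgt => A; have [M [Mr hM]] := wy A.
  exists (Num.max M T1); split; first exact: num_real.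
  move=> t; rewrite gt_max => /andP[Mt T1t].
  by rewrite -[w t]gtr0_norm ?hM // wpos // ltW.
right; have wneg : forall t, T1 <= t -> 0 < - w t.
  apply: continuous_pos_on_ray => [s sT1|t /w_neq0|]; rewrite ?oppr_eq0 //.
    by apply: continuousN; exact: wc.
  by rewrite oppr_gt0 lt_neqAle wT1 andbT w_neq0.
apply/cvgryPgt => A; have [M [Mr hM]] := wy A.
exists (Num.max M T1); split; first exact: num_real.
move=> t; rewrite gt_max => /andP[Mt T1t].
by rewrite -[- w t]gtr0_norm ?normrN ?hM // wneg // ltW.
Qed.

Lemma flow_loss_vanishes :
  (exists c, L c = 0) \/ (L x @[x --> -oo] --> 0) \/ (L x @[x --> +oo] --> 0).
Proof.
have [rec|unbounded] := pselect (exists B, forall T, exists2 t, T <= t & `|w t| <= B).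
  by left; exact: flow_recurrent_zero.
have wy : `|w t| @[t --> +oo] --> +oo.
  apply/cvgryPgt => A; apply: contrapT => nA; apply: unbounded; exists A => T.
  apply: contrapT => nT; apply: nA; exists T; split; first exact: num_real.
  by move=> t Tt; rewrite ltNge; apply/negP => tA; apply: nT; exists t => //; exact: ltW.
right; have [wpinf|wninf] := flow_escape wy; [right|left].
  exact: flow_tail.
apply/cvgNy_compNP; apply: (flow_tail _ (fun t => - w t)) => //=.
- by move=> t; apply: continuousN; exact: w_cont.
- by move=> s t s0 st; rewrite !opprK; exact: Lw_nonincreasing.
- by move=> e /Lw_small[t t0 Lt]; exists t; rewrite ?opprK.
Qed.

End flow_on_the_line.

Section gradient_flow.
Context {R : realType} {H : normedModType R} {ip : H -> H -> R} {Phi : R -> H} {f : H}.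
Hypothesis ipC : forall x y, ip x y = ip y x.
Hypothesis ipL : forall (a : R) x y z, ip (a *: x + y) z = a * ip x z + ip y z.

Lemma ipDl x y z : ip (x + y) z = ip x z + ip y z.
Proof. by rewrite -[x]scale1r ipL mul1r scale1r. Qed.

Lemma ip0l z : ip 0 z = 0.
Proof. by have := ipDl 0 0 z; rewrite addr0; lra. Qed.

Lemma ipZl a x z : ip (a *: x) z = a * ip x z.
Proof. by rewrite -[a *: x]addr0 ipL ip0l addr0. Qed.

Lemma ipBl x y z : ip (x - y) z = ip x z - ip y z.
Proof. by rewrite ipDl -scaleN1r ipZl mulN1r. Qed.

Lemma ipBr x y z : ip z (x - y) = ip z x - ip z y.
Proof. by rewrite ipC ipBl !(ipC z). Qed.

Lemma ipZr a x z : ip z (a *: x) = a * ip z x.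
Proof. by rewrite ipC ipZl ipC. Qed.

Hypothesis ip_cont : continuous (fun z : H * H => ip z.1 z.2).

Lemma cvg_ip (T : Type) (F : set_system T) (a b : T -> H) (x y : H) :
  Filter F -> a @ F --> x -> b @ F --> y -> ip (a t) (b t) @[t --> F] --> ip x y.
Proof. by move=> FF ha hb; apply: (cvg_comp _ _ (cvg_pair ha hb)) (ip_cont (x, y)). Qed.

Lemma derivable_ip (a b : R -> H) x : derivable a x 1 -> derivable b x 1 ->
  derivable (fun t => ip (a t) (b t)) x 1.
Proof.
move=> da db; set D := fun (c : R -> H) (h : R) => h^-1 *: (c (h *: 1 + x) - c x).
have bx : (fun h : R => b (h *: 1 + x)) @ 0^' --> b x.
  have bc : b @ x --> b x by apply/differentiable_continuous/derivable1_diffP.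
  apply: cvg_within_filter; apply: (cvg_comp _ _ _ bc).
  suff : h%:A + x @[h --> (0 : R)] --> 0%:A + x by rewrite scale0r add0r.
  by apply: cvgD; [apply: cvgZ; [exact: cvg_id | exact: cvg_cst] | exact: cvg_cst].
apply/cvg_ex; exists (ip ('D_1 a x) (b x) + ip (a x) ('D_1 b x)).
have -> : (fun h : R =>
      h^-1 *: (((fun t => ip (a t) (b t)) \o shift x) (h *: 1) - ip (a x) (b x)))
    = (fun h => ip (D a h) (b (h *: 1 + x)) + ip (a x) (D b h)).
  apply/funext => h; rewrite /D /= ipZl ipZr ipBl ipBr /GRing.scale /=; lra.
by apply: cvgD; apply: cvg_ip => //;
  solve [exact: da | exact: db | exact: bx | exact: cvg_cst].
Qed.

Hypothesis sqr_norm_le_ip : forall x, `|x| ^+ 2 <= ip x x.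
Hypothesis Phi_derivable : forall w, derivable Phi w 1.

Local Notation L := (loss ip Phi f).

Lemma loss_derivable w : derivable L w 1.
Proof.
apply: derivableM; first exact: derivable_cst.
by apply: derivable_ip => //; apply: derivableB => //; exact: derivable_cst.
Qed.

Lemma loss_continuous : continuous L.
Proof. by move=> w; apply/differentiable_continuous/derivable1_diffP/loss_derivable. Qed.

Lemma sqr_norm_le_loss w : `|f - Phi w| ^+ 2 <= 2 * L w.
Proof. by rewrite /loss mulrA divff ?mul1r. Qed.

Lemma loss_ge0 w : 0 <= L w.
Proof. by have := sqr_norm_le_loss w; have := sqr_ge0 `|f - Phi w|; lra. Qed.

Lemma loss_le0 w : L w <= 0 -> f = Phi w.
Proof.
move=> Lw; apply/eqP; rewrite -subr_eq0 -normr_eq0 -sqrf_eq0 eq_le sqr_ge0 andbT.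
by have := sqr_norm_le_loss w; lra.
Qed.

Lemma cvg_loss0 (F : set_system R) : Filter F ->
  L x @[x --> F] --> 0 -> Phi x @[x --> F] --> f.
Proof.
move=> FF /cvgrPdist_lt L0; apply/cvgrPdist_lt => e e0.
have e20 : 0 < e ^+ 2 / 2 by rewrite divr_gt0 // exprn_gt0.
apply: filterS (L0 _ e20) => x; rewrite sub0r normrN ger0_norm ?loss_ge0 // => Lx.
rewrite -(ltr_pXn2r (n := 2)) ?nnegrE //; have := sqr_norm_le_loss x; lra.
Qed.

Lemma GF_loss_nonincreasing w : is_GF_solution ip Phi f w ->
  forall s t, 0 <= s -> s <= t -> L (w t) <= L (w s).
Proof.
move=> [_ wc wd]; apply: (@ler0_derive1_nincry _ (L \o w) 0).
- move=> t; rewrite in_itv /= andbT => /wd[dw _].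
  apply/derivable1_diffP; apply: differentiable_comp; apply/derivable1_diffP => //.
  exact: loss_derivable.
- move=> t; rewrite in_itv /= andbT => /wd[dw dwE].
  by rewrite (derive1_comp dw (loss_derivable _)) dwE mulrN -expr2 oppr_le0 sqr_ge0.
- rewrite set_itvcy => t; apply: continuous_comp (wc t) _.
  exact: loss_continuous.
Qed.

Lemma GF_learnable_image_or_limit : GF_learnable ip Phi f ->
  (exists w, f = Phi w) \/ (Phi x @[x --> -oo] --> f) \/ (Phi x @[x --> +oo] --> f).
Proof.
move=> [w [gf infL]]; have [_ w_cont _] := gf.
have Lw_small :=
  inf_image_eq0_lt _ _ (ex_intro _ 0 (lexx 0)) (fun t _ => loss_ge0 (w t)) infL.
have [[c Lc]|[L0|L0]] := flow_loss_vanishes L w w_cont loss_continuous loss_ge0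
  (GF_loss_nonincreasing _ gf) Lw_small.
- by left; exists c; apply: loss_le0; rewrite Lc.
- by right; left; exact: cvg_loss0.
- by right; right; exact: cvg_loss0.
Qed.

End gradient_flow.

Section inner_product_space.
Context {R : realType} {H : normedModType R} {ip : H -> H -> R}.
Hypothesis ip_inner : is_inner_product ip.
Hypothesis normE : forall x : H, `|x| = ipnorm ip x.

Lemma ip_normE x : ip x x = `|x| ^+ 2.
Proof.
have [_ ipL ip_pos] := ip_inner; rewrite normE sqr_sqrtr //.
by have [->|/ip_pos/ltW //] := eqVneq x 0; rewrite (ip0l ipL).
Qed.

Lemma ip_polarization x y : ip x y = (`|x + y| ^+ 2 - `|x| ^+ 2 - `|y| ^+ 2) / 2.
Proof.
have [ipC ipL _] := ip_inner.
by rewrite -!ip_normE (ipDl ipL) (ipC x (x + y)) (ipC y (x + y)) !(ipDl ipL) (ipC y x); lra.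
Qed.

Lemma ip_continuous : continuous (fun z : H * H => ip z.1 z.2).
Proof.
rewrite (_ : (fun z : H * H => _) =
    fun z => (`|z.1 + z.2| ^+ 2 - `|z.1| ^+ 2 - `|z.2| ^+ 2) / 2); last first.
  by apply/funext => z; exact: ip_polarization.
move=> z; apply: cvgM; last exact: cvg_cst.
have c1 : p.1 @[p --> z] --> z.1 by exact: cvg_fst.
have c2 : p.2 @[p --> z] --> z.2 by exact: cvg_snd.
by apply: cvgB; [apply: cvgB|]; apply: cvgM; apply: cvg_norm => //; exact: cvgD.
Qed.

End inner_product_space.

Lemma Cantor_of_nat_le n : ((Cantor.of_nat n).1 <= n /\ (Cantor.of_nat n).2 <= n)%N.
Proof.
have := Cantor.to_nat_non_decreasing (Cantor.of_nat n).1 (Cantor.of_nat n).2.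
by rewrite -surjective_pairing Cantor.cancel_to_of; lia.
Qed.

Lemma sum_Cantor_of_nat_le {R : numDomainType} (v : nat -> nat -> R) N :
  (forall k j, 0 <= v k j) ->
  \sum_(n < N) v (Cantor.of_nat n).1 (Cantor.of_nat n).2
    <= \sum_(k < N) \sum_(j < N) v k j.
Proof.
move=> v_ge0; pose q (n : 'I_N) : 'I_N * 'I_N :=
  (Ordinal (leq_ltn_trans (Cantor_of_nat_le n).1 (ltn_ord n)),
   Ordinal (leq_ltn_trans (Cantor_of_nat_le n).2 (ltn_ord n))).
have qE (n : 'I_N) : ((q n).1 : nat, (q n).2 : nat) = Cantor.of_nat n.
  by rewrite -surjective_pairing.
have q_inj : {in [set: 'I_N] &, injective q}.
  move=> n n' _ _ qnn'; apply/val_inj/Cantor.of_nat_inj.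
  by rewrite -qE -(qE n') qnn'.
have -> : \sum_(n < N) v (Cantor.of_nat n).1 (Cantor.of_nat n).2
    = \sum_(n in [set: 'I_N]) v (q n).1 (q n).2.
  by apply: eq_big => [n|n _]; rewrite ?in_setT // -qE.
rewrite pair_bigA /= (bigID (mem (q @: [set: 'I_N]))) /= big_imset //=.
by rewrite lerDl sumr_ge0.
Qed.

Lemma sum_geometric_halves {R : realFieldType} (e : R) K :
  \sum_(k < K) e / 2 ^+ k.+1 = e - e / 2 ^+ K.
Proof.
elim: K => [|K IH]; first by rewrite big_ord0 expr0 divr1 subrr.
by rewrite big_ord_recr /= IH exprS; field; rewrite expf_neq0.
Qed.

Lemma sum_if_ltn_le {R : numDomainType} (t : R) (m N : nat) : 0 <= t ->
  \sum_(n < N) (if (n < m)%N then t else 0) <= m%:R * t.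
Proof.
move=> t0; suff -> : \sum_(n < N) (if (n < m)%N then t else 0) = (minn N m)%:R * t.
  by rewrite ler_wpM2r // ler_nat geq_minr.
elim: N => [|N IH]; first by rewrite big_ord0 min0n mul0r.
rewrite big_ord_recr /= IH; case: ifP => Nm.
  by rewrite (_ : minn N.+1 m = (minn N m).+1) -?natr1 ?mulrDl ?mul1r //; lia.
by rewrite (_ : minn N.+1 m = minn N m) ?addr0 //; move: Nm; lia.
Qed.

Lemma grid_cover {R : realType} (a h x : R) (m : nat) : 0 < h -> (0 < m)%N ->
  a <= x <= a + m%:R * h ->
  exists2 j, (j < m)%N & a + j%:R * h <= x <= a + j%:R * h + h.
Proof.
move=> h0 m0 /andP[ax xm]; set u := (x - a) / h.
have u0 : 0 <= u by rewrite divr_ge0 ?subr_ge0 // ltW.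
have um : u <= m%:R by rewrite ler_pdivrMr // lerBlDl.
have [j jm [ju uj]] : exists2 j, (j < m)%N & j%:R <= u /\ u <= j%:R + 1.
  have [um'|mu] := ltnP (Num.truncn u) m.
    by exists (Num.truncn u) => //; rewrite truncn_le natr1 (ltW (truncnS_gt u)).
  exists m.-1; first by rewrite prednK.
  rewrite natr1 prednK //; split => //.
  have tu : (Num.truncn u)%:R <= u by rewrite truncn_le.
  by apply: le_trans tu; rewrite ler_nat (leq_trans (leq_pred m)).
exists j => //; have xE : x = a + u * h by rewrite divfK ?gt_eqF // addrC subrK.
by rewrite xE; apply/andP; split; nra.
Qed.

Lemma cube_volume_le {R : realFieldType} (c m e : R) (n : nat) : (1 < n)%N ->
  0 <= c -> 0 < m -> c <= m -> c ^+ 2 <= e * m -> m * (c / m) ^+ n <= e.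
Proof.
move=> n1 c0 m0 cm cme; have cm0 : 0 <= c / m by rewrite divr_ge0 // ltW.
have cm1 : c / m <= 1 by rewrite ler_pdivrMr ?mul1r.
rewrite -(subnKC n1) exprD; apply: le_trans (_ : m * (c / m) ^+ 2 <= e).
  apply: ler_wpM2l; first exact: ltW.
  by rewrite -[leRHS]mulr1 ler_wpM2l ?exprn_ge0 ?exprn_ile1.
have -> : m * (c / m) ^+ 2 = c ^+ 2 / m by field; rewrite gt_eqF.
by rewrite ler_pdivrMr.
Qed.

Section lebesgue_null.
Context {R : realType} {d : nat}.
Implicit Types A B : set 'rV[R]_d.

Lemma lebesgue_null_subset A B : A `<=` B -> lebesgue_null B -> lebesgue_null A.
Proof.
move=> AB nullB e e0; have [a [b [ab Bab vol]]] := nullB e e0.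
by exists a, b; split => //; exact: subset_trans AB Bab.
Qed.

Lemma lebesgue_null_set1 (c : 'rV[R]_d) : (0 < d)%N -> lebesgue_null [set c].
Proof.
move=> d0 e e0; exists (fun=> c), (fun=> c); split => //.
- by move=> x ->; exists 0%N => // i; rewrite lexx.
- move=> N; rewrite big1 ?ltW // => n _.
  rewrite (eq_bigr (fun=> 0)) => [|i _]; last exact: subrr.
  by rewrite prodr_const card_ord expr0n gtn_eqF.
Qed.

(* Cover the k-th set with total volume e / 2^(k+1) and merge the covers
   along the Cantor pairing. *)
Lemma lebesgue_null_bigcup (A : nat -> set 'rV[R]_d) :
  (forall k, lebesgue_null (A k)) -> lebesgue_null (\bigcup_k A k).
Proof.
move=> nullA e e0.
have /choice[ab hab] : forall k, exists ab : (nat -> 'rV[R]_d) * (nat -> 'rV[R]_d),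
  [/\ (forall n i, ab.1 n 0 i <= ab.2 n 0 i),
      A k `<=` \bigcup_n [set x | forall i, ab.1 n 0 i <= x 0 i <= ab.2 n 0 i]
    & forall N, \sum_(n < N) \prod_(i < d) (ab.2 n 0 i - ab.1 n 0 i) <= e / 2 ^+ k.+1].
  move=> k; have [|a [b hk]] := nullA k (e / 2 ^+ k.+1); last by exists (a, b).
  by rewrite divr_gt0 // exprn_gt0.
exists (fun n => (ab (Cantor.of_nat n).1).1 (Cantor.of_nat n).2).
exists (fun n => (ab (Cantor.of_nat n).1).2 (Cantor.of_nat n).2); split.
- by move=> n i; have [+ _ _] := hab (Cantor.of_nat n).1; apply.
- move=> x [k _ xk]; have [_ cover _] := hab k; have [j' _ xj'] := cover x xk.
  exists (Cantor.to_nat (k, j')) => //.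
  by rewrite Cantor.cancel_of_to.
- move=> N; pose v k j := \prod_(i < d) ((ab k).2 j 0 i - (ab k).1 j 0 i).
  have v_ge0 k j : 0 <= v k j.
    by apply: prodr_ge0 => i _; have [abk _ _] := hab k; rewrite subr_ge0 abk.
  have := sum_Cantor_of_nat_le _ N v_ge0; rewrite /v => /le_trans; apply.
  apply: le_trans (_ : \sum_(k < N) e / 2 ^+ k.+1 <= e).
    by apply: ler_sum => k _; have [_ _] := hab k; apply.
  by rewrite sum_geometric_halves lerBlDr lerDl divr_ge0 ?exprn_ge0 // ltW.
Qed.

Lemma lebesgue_null_setU A B :
  lebesgue_null A -> lebesgue_null B -> lebesgue_null (A `|` B).
Proof.
move=> nullA nullB; apply: (@lebesgue_null_subset _ (\bigcup_n if n is 0%N then A else B)).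
  by move=> x [Ax|Bx]; [exists 0%N | exists 1%N].
by apply: lebesgue_null_bigcup => -[].
Qed.

(* Cover g([-r, r]) by m cubes of side c / m around a grid of step h = 2r/m:
   total volume m (c/m)^d with d >= 2 tends to 0. *)
Lemma lebesgue_null_lipschitz_image (g : R -> 'rV[R]_d) (r K : R) :
  (1 < d)%N -> 0 < r -> 0 <= K ->
  (forall x y i, -r <= x <= r -> -r <= y <= r -> `|g x 0 i - g y 0 i| <= K * `|x - y|) ->
  lebesgue_null (g @` [set x | -r <= x <= r]).
Proof.
move=> d1 r0 K0 g_lip e e0.
pose c := 4 * K * r; have c0 : 0 <= c by rewrite !mulr_ge0 // ltW.
pose m := (Num.truncn (c ^+ 2 / e + c)).+1.
have m_gt : c ^+ 2 / e + c < m%:R := truncnS_gt _.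
have ce0 : 0 <= c ^+ 2 / e by rewrite divr_ge0 ?sqr_ge0 // ltW.
pose h := 2 * r / m%:R; have h0 : 0 < h by rewrite divr_gt0 ?ltr0n // mulr_gt0.
have mh : m%:R * h = 2 * r by rewrite mulrC divfK // pnatr_eq0.
have Kh0 : 0 <= K * h by rewrite mulr_ge0 // ltW.
pose x_ (j : nat) := - r + j%:R * h.
exists (fun n => \row_i (if (n < m)%N then g (x_ n) 0 i - K * h else 0)).
exists (fun n => \row_i (if (n < m)%N then g (x_ n) 0 i + K * h else 0)); split.
- by move=> n i; rewrite !mxE; case: ifP => // _; lra.
- move=> _ [x xr <-]; have /andP[rx xr'] := xr.
  have [|j jm /andP[xj1 xj2]] := grid_cover (- r) h x m h0 (isT : (0 < m)%N).
    by rewrite mh; lra.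
  have jh0 : 0 <= j%:R * h by rewrite mulr_ge0 // ltW.
  have xjr : - r <= x_ j <= r by rewrite /x_; apply/andP; split; lra.
  have /andP[xj0 xjh] : 0 <= x - x_ j <= h by rewrite /x_; apply/andP; split; lra.
  exists j => // i; rewrite !mxE jm.
  have := g_lip x (x_ j) i xr xjr; rewrite ler_norml ger0_norm //.
  by move=> /andP[]; nra.
- move=> N.
  rewrite (eq_bigr (fun n : 'I_N => if (n < m)%N then (2 * K * h) ^+ d else 0)).
    apply: le_trans (sum_if_ltn_le _ _ _ (exprn_ge0 _ _)) _; first by lra.
    rewrite (_ : 2 * K * h = c / m%:R); last by rewrite /c /h; field; rewrite pnatr_eq0.
    by apply: cube_volume_le => //; [lra | rewrite -ler_pdivrMl //; lra].
  move=> n _; case: ifP => nm; under eq_bigr do rewrite !mxE /=.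
    by rewrite (eq_bigr (fun=> 2 * K * h)) ?prodr_const ?card_ord // => i _; lra.
  rewrite (eq_bigr (fun=> 0)) ?prodr_const ?card_ord => [|i _]; last exact: subrr.
  by rewrite expr0n gtn_eqF // ltnW.
Qed.

End lebesgue_null.

Section row_vector_inner_product.
Context {R : realType} {d : nat}.
Implicit Types u v x y z : 'rV[R]_d.

Lemma dotrvC u v : dotrv u v = dotrv v u.
Proof. by apply: eq_bigr => i _; rewrite mulrC. Qed.

Lemma dotrvDl (a : R) x y z : dotrv (a *: x + y) z = a * dotrv x z + dotrv y z.
Proof.
by rewrite /dotrv mulr_sumr -big_split; apply: eq_bigr => i _; rewrite !mxE mulrDl mulrA.
Qed.

Lemma dotrv_continuous : continuous (fun z : 'rV[R]_d * 'rV[R]_d => dotrv z.1 z.2).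
Proof.
have coordM i : continuous (fun z : 'rV[R]_d * 'rV[R]_d => z.1 0 i * z.2 0 i).
  move=> z; have c1 : p.1 @[p --> z] --> z.1 by exact: cvg_fst.
  have c2 : p.2 @[p --> z] --> z.2 by exact: cvg_snd.
  by apply: cvgM; [apply: (continuous_cvg _ (@coord_continuous R 1 d 0 i z.1) c1) |
    apply: (continuous_cvg _ (@coord_continuous R 1 d 0 i z.2) c2)].
by apply: continuous_big => [|i _]; [exact: add_continuous | exact: coordM].
Qed.

Lemma sqr_coord_le_dotrv v i : v 0 i ^+ 2 <= dotrv v v.
Proof.
rewrite /dotrv (bigD1 i) //= expr2 lerDl.
by apply: sumr_ge0 => j _; rewrite -expr2 sqr_ge0.
Qed.

Lemma dotrv_ge0 v : 0 <= dotrv v v.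
Proof. by apply: sumr_ge0 => i _; rewrite -expr2 sqr_ge0. Qed.

Lemma abs_coord_le_ipnorm v i : `|v 0 i| <= ipnorm (@dotrv R d) v.
Proof. by rewrite /ipnorm -sqrtr_sqr ler_sqrt ?dotrv_ge0 // sqr_coord_le_dotrv. Qed.

Lemma sqr_norm_le_dotrv v : `|v| ^+ 2 <= dotrv v v.
Proof.
have : `|v| <= ipnorm (@dotrv R d) v.
  rewrite [leLHS]/Num.Def.normr /= mx_normrE.
  by apply: bigmax_le => [|[i j] _]; rewrite ?sqrtr_ge0 // (ord1 i) abs_coord_le_ipnorm.
by rewrite -ler_sqr ?nnegrE ?sqrtr_ge0 // sqr_sqrtr ?dotrv_ge0.
Qed.

End row_vector_inner_product.

Lemma lipschitz_of_bounded_derive {R : realType} (f df : R -> R) (a b M : R) :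
  (forall x : R, is_derive x 1 f (df x)) -> (forall x, a <= x <= b -> `|df x| <= M) ->
  forall x y, a <= x <= b -> a <= y <= b -> `|f x - f y| <= M * `|x - y|.
Proof.
move=> f'_df df_le x y.
wlog xy : x y / x <= y => [hwlog|/andP[ax xb] /andP[ay yb]].
  by case: (leP x y) => [|/ltW] xy hx hy; [|rewrite distrC (distrC x)]; exact: hwlog.
have [c /[!in_itv] /andP[xc cy] fE] := MVT_segment xy (fun z _ => f'_df z)
  (derivable_within_continuous (fun z _ => @ex_derive _ _ _ _ _ _ _ (f'_df z))).
rewrite distrC fE (distrC x) normrM [`|y - x|]ger0_norm ?subr_ge0 //.
by rewrite ler_wpM2r ?subr_ge0 // df_le // (le_trans ax xc) (le_trans cy yb).
Qed.

Section row_vector_path.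
Context {R : realType} {d : nat} {Phi : R -> 'rV[R]_d}.
Hypothesis Phi_derivable : forall w, derivable Phi w 1.

Lemma is_derive_coord (x : R) (i : 'I_d) :
  is_derive x 1 (fun y => Phi y 0 i) (derive1 Phi x 0 i).
Proof.
have dPi : derivable (fun y => Phi y 0 i) x 1.
  by move/derivable_mxP : (Phi_derivable x); apply.
by rewrite derive1E (derive_mx (Phi_derivable x)) mxE; exact: derivableP.
Qed.

Lemma coord_lipschitz_on (k r : R) :
  (forall x y, ipnorm (@dotrv R d) (derive1 Phi x - derive1 Phi y) <= k * `|x - y|) ->
  forall x y i, - r <= x <= r -> - r <= y <= r ->
  `|Phi x 0 i - Phi y 0 i| <= (`|k| * r + ipnorm (@dotrv R d) (derive1 Phi 0)) * `|x - y|.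
Proof.
move=> Phi'_lip x y i; apply: lipschitz_of_bounded_derive (is_derive_coord^~ i) _ x y.
move=> c /andP[rc cr].
have -> : derive1 Phi c 0 i = (derive1 Phi c - derive1 Phi 0) 0 i + derive1 Phi 0 0 i.
  by rewrite !mxE subrK.
apply: le_trans (ler_normD _ _) _; rewrite lerD ?abs_coord_le_ipnorm //.
apply: le_trans (abs_coord_le_ipnorm _ _) _; apply: le_trans (Phi'_lip c 0) _.
by rewrite subr0 (le_trans (ler_wpM2r _ (ler_norm k))) // ler_wpM2l // ler_norml rc cr.
Qed.

End row_vector_path.

Theorem proposition1 (R : realType) :
  (forall (H : completeNormedModType R) (ip : H -> H -> R) (Phi : R -> H) (f : H),
     is_inner_product ip ->
     (forall x : H, `|x| = ipnorm ip x) ->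
     C11 ip Phi ->
     GF_learnable ip Phi f ->
     (exists w : R, f = Phi w) \/
     (Phi x @[x --> -oo] --> f) \/ (Phi x @[x --> +oo] --> f))
  /\
  (forall (d : nat) (Phi : R -> 'rV[R]_d),
     (2 <= d)%N ->
     C11 (@dotrv R d) Phi ->
     lebesgue_null (GF_learnable (@dotrv R d) Phi)).
Proof.
split.
  move=> H ip Phi f ip_inner normE [Phi_derivable _]; have [ipC ipL _] := ip_inner.
  apply: (GF_learnable_image_or_limit ipC ipL (ip_continuous ip_inner normE)) => // x.
  by rewrite (ip_normE ip_inner normE).
move=> d Phi d2 [Phi_derivable [k Phi'_lip]].
pose segment (n : nat) := [set x : R | - n.+1%:R <= x <= n.+1%:R].
apply: (@lebesgue_null_subset _ _ _ ([set lim (Phi x @[x --> -oo])] `|`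
  [set lim (Phi x @[x --> +oo])] `|` \bigcup_n Phi @` segment n)).
  move=> f /(GF_learnable_image_or_limit dotrvC dotrvDl dotrv_continuous
    sqr_norm_le_dotrv Phi_derivable) [[w ->]|[Phi_f|Phi_f]].
  - right; exists (Num.truncn `|w|) => //; exists w => //.
    by rewrite /segment /= -ler_norml ltW // truncnS_gt.
  - by left; left; rewrite /= (cvg_lim _ Phi_f).
  - by left; right; rewrite /= (cvg_lim _ Phi_f).
apply: lebesgue_null_setU.
  by apply: lebesgue_null_setU; apply: lebesgue_null_set1; exact: ltnW.
apply: lebesgue_null_bigcup => n.
have Phi_lip := coord_lipschitz_on Phi_derivable k n.+1%:R Phi'_lip.
apply: (lebesgue_null_lipschitz_image _ _ _ d2 _ _ Phi_lip); first by rewrite ltr0n.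
by rewrite addr_ge0 ?mulr_ge0 ?sqrtr_ge0.
Qed.
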